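(* Let $v>0$ and let $(a,r,s):\mathbb{R}\to\mathbb{R}^3$ be a solution of $$\partial_\xi a=r,\qquad \partial_\xi r=-vr-\frac{sa}{2}+\frac{a|r|}{2},\qquad \partial_\xi s=-vs-ra$$ such that $(a,r,s)(\xi)\to(a_0,0,0)$ as $\xi\to-\infty$ for some $a_0\in\mathbb{R}$, and $(a,r,s)\not\equiv(a_0,0,0)$. Then $|a_0|\ge\frac45 v$. In particular, there exists $\xi_0\in\mathbb{R}$ such that $a(\xi)$ is nonzero and of constant sign for all $\xi<\xi_0$. *)

From Stdlib Require Import Reals.
From Coquelicot Require Export Coquelicot.
Open Scope R_scope.

(* The energy E = r^2 + s^2/2 is a Lyapunov function as long as |a| <= v:
   E' = -v (2 r^2 + s^2) + a (r |r| - 2 r s) and |r |r| - 2 r s| <= 2 r^2 + s^2.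
   Suppose |a0| < v and fix w strictly between them.  On any half-line
   (-oo, y) on which |a| <= w, E is nonincreasing and tends to 0 at -oo, hence
   vanishes; so r = s = 0 there and a is constant, equal to a0.  By continuity
   of a, such a half-line can always be extended to the right, so the solution
   is at rest everywhere.  Hence |a0| >= v > 4v/5, and a has the sign of a0
   near -oo. *)

From Stdlib Require Import Reals Lra Classical.
From Coquelicot Require Import Coquelicot.
Open Scope R_scope.

Lemma left_half_line_induction (Q : R -> Prop) :
  (exists y, forall t, t < y -> Q t) ->
  (forall m, (forall t, t < m -> Q t) ->
     exists d, 0 < d /\ forall t, t < m + d -> Q t) ->
  forall t, Q t.
Proof.
  intros [y0 Hy0] Hstep t.
  set (P := fun y => forall u, u < y -> Q u).
  destruct (classic (forall y, P y)) as [Hall | Hbounded].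
  { apply (Hall (t + 1)); lra. }
  apply not_all_ex_not in Hbounded as [b Hb].
  assert (Hub : forall y, P y -> y <= b).
  { intros y Hy; destruct (Rle_or_lt y b) as [|Hby]; [assumption|].
    exfalso; apply Hb; intros u Hu; apply Hy; lra. }
  destruct (completeness P) as [m [Hm_ub Hm_least]]; [exists b; exact Hub | exists y0; exact Hy0 |].
  assert (HPm : P m).
  { intros u Hu.
    destruct (classic (exists y, P y /\ u < y)) as [[y [Hy Huy]] | Hno]; [exact (Hy u Huy)|].
    enough (m <= u) by lra.
    apply Hm_least; intros y Hy.
    destruct (Rle_or_lt y u) as [|Huy]; [assumption|].
    exfalso; apply Hno; exists y; auto. }
  destruct (Hstep m HPm) as [d [Hd HPmd]].
  specialize (Hm_ub _ HPmd); lra.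
Qed.

Lemma nonincreasing_of_derive_nonpos (f df : R -> R) (x y : R) :
  x <= y -> (forall t, x <= t <= y -> is_derive f t (df t) /\ df t <= 0) ->
  f y <= f x.
Proof.
  intros Hxy Hf.
  destruct (MVT_gen f x y df) as [c [Hc Hfc]].
  - intros t Ht; rewrite Rmin_left, Rmax_right in Ht by lra; apply Hf; lra.
  - intros t Ht; rewrite Rmin_left, Rmax_right in Ht by lra.
    apply continuity_pt_filterlim, (ex_derive_continuous f t).
    exists (df t); apply Hf; exact Ht.
  - rewrite Rmin_left, Rmax_right in Hc by lra.
    pose proof (proj2 (Hf c Hc)); nra.
Qed.

Lemma const_of_derive_zero (f : R -> R) (x y : R) :
  x <= y -> (forall t, x <= t <= y -> is_derive f t 0) -> f y = f x.
Proof.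
  intros Hxy Hf.
  apply Rle_antisym.
  - apply (nonincreasing_of_derive_nonpos f (fun _ => 0)); [lra|].
    intros t Ht; split; [apply Hf; exact Ht | apply Rle_refl].
  - enough (- f y <= - f x) by lra.
    apply (nonincreasing_of_derive_nonpos (fun u => - f u) (fun _ => - 0)); [lra|].
    intros t Ht; split; [exact (is_derive_opp f t 0 (Hf t Ht)) | cbv beta; lra].
Qed.

Lemma le_lim_minf_of_nonincreasing (f : R -> R) (l t : R) :
  is_lim f m_infty l -> (forall x, x < t -> f t <= f x) -> f t <= l.
Proof.
  intros Hl Hmono.
  apply (is_lim_le_loc (fun _ => f t) f m_infty (f t) l); [| apply is_lim_const | exact Hl].
  exists t; exact Hmono.
Qed.

Lemma lim_minf_of_const_left (f : R -> R) (l t : R) :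
  is_lim f m_infty l -> (forall x, x < t -> f x = f t) -> f t = l.
Proof.
  intros Hl Hconst.
  assert (Ht : is_lim f m_infty (f t)).
  { apply (is_lim_ext_loc (fun _ => f t)); [exists t; intros x Hx; symmetry; auto | apply is_lim_const]. }
  apply is_lim_unique in Hl; apply is_lim_unique in Ht.
  rewrite Hl in Ht; injection Ht; auto.
Qed.

Lemma lim_minf_sign (f : R -> R) (l : R) :
  is_lim f m_infty l -> l <> 0 ->
  exists x0, (forall x, x < x0 -> 0 < f x) \/ (forall x, x < x0 -> f x < 0).
Proof.
  intros Hl Hl0.
  assert (Heps : 0 < Rabs l / 2) by (apply Rabs_pos_lt in Hl0; lra).
  destruct (proj1 (filterlim_locally f l) Hl (mkposreal _ Heps)) as [x0 Hnear].
  assert (Hclose : forall x, x < x0 -> Rabs (f x - l) < Rabs l / 2)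
    by (intros x Hx; apply (Hnear x Hx)).
  exists x0.
  destruct (Rcase_abs l) as [Hneg | Hpos]; [right | left]; intros x Hx;
    pose proof (Rabs_def2 _ _ (Hclose x Hx)) as Hfx.
  - rewrite Rabs_left in Hfx by exact Hneg; lra.
  - rewrite Rabs_right in Hfx by exact Hpos; destruct Hpos; lra.
Qed.

Lemma continuous_const_left_extend (f : R -> R) (c m eps : R) :
  continuous f m -> (forall t, t < m -> f t = c) -> 0 < eps ->
  exists d, 0 < d /\ forall t, t < m + d -> Rabs (f t - c) < eps.
Proof.
  intros Hf Hc Heps.
  assert (Heps2 : 0 < eps / 2) by lra.
  destruct (proj1 (filterlim_locally f (f m)) Hf (mkposreal _ Heps2)) as [[d Hd] Hnear].
  assert (Hclose : forall u, Rabs (u - m) < d -> Rabs (f u - f m) < eps / 2)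
    by (intros u Hu; apply (Hnear u Hu)).
  assert (Hfm : Rabs (f m - c) < eps / 2).
  { rewrite <- (Hc (m - d / 2)) by lra.
    rewrite Rabs_minus_sym; apply Hclose.
    rewrite Rabs_left; lra. }
  exists d; split; [exact Hd|].
  intros t Ht; destruct (Rlt_or_le t m) as [Htm | Hmt].
  - rewrite (Hc t Htm); unfold Rminus; rewrite Rplus_opp_r, Rabs_R0; exact Heps.
  - assert (Hft : Rabs (f t - f m) < eps / 2) by (apply Hclose; rewrite Rabs_right; lra).
    replace (f t - c) with ((f t - f m) + (f m - c)) by ring.
    pose proof (Rabs_triang (f t - f m) (f m - c)); lra.
Qed.

Lemma lyapunov_rate_nonpos (v A r s : R) : Rabs A <= v ->
  2 * r * (- v * r - s * A / 2 + A * Rabs r / 2) + s * (- v * s - r * A) <= 0.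
Proof.
  intros HA.
  assert (Hmixed : Rabs (r * Rabs r - 2 * r * s) <= 2 * r * r + s * s).
  { pose proof (Rle_0_sqr (r - s)); pose proof (Rle_0_sqr (r + s)); unfold Rsqr in *.
    apply Rabs_le; destruct (Rcase_abs r) as [Hr | Hr];
      [rewrite (Rabs_left r Hr) | rewrite (Rabs_right r Hr)]; split; nra. }
  assert (Hbound : A * (r * Rabs r - 2 * r * s) <= v * (2 * r * r + s * s)).
  { apply Rle_trans with (Rabs (A * (r * Rabs r - 2 * r * s))); [apply Rle_abs|].
    rewrite Rabs_mult; apply Rmult_le_compat; auto using Rabs_pos. }
  nra.
Qed.

Section Lyapunov.

Variables (v a0 : R) (a r s : R -> R).
Hypothesis Hr : forall t, is_derive r t (- v * r t - s t * a t / 2 + a t * Rabs (r t) / 2).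
Hypothesis Hs : forall t, is_derive s t (- v * s t - r t * a t).

Definition energy (t : R) : R := r t * r t + s t * s t / 2.

Definition energy_rate (t : R) : R :=
  2 * r t * (- v * r t - s t * a t / 2 + a t * Rabs (r t) / 2)
  + s t * (- v * s t - r t * a t).

Lemma is_derive_energy t : is_derive energy t (energy_rate t).
Proof.
  pose proof (is_derive_plus _ _ t _ _ (is_derive_mult r r t _ _ (Hr t) (Hr t) Rmult_comm)
    (is_derive_scal _ _ (/ 2) _ (is_derive_mult s s t _ _ (Hs t) (Hs t) Rmult_comm))) as Hsum.
  match type of Hsum with is_derive _ _ ?d => replace (energy_rate t) with d end.
  - eapply is_derive_ext; [| exact Hsum].
    intros u; unfold energy, plus, mult; simpl; field.
  - unfold energy_rate, plus, mult; simpl; field.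
Qed.

Lemma energy_nonincreasing x y :
  x <= y -> (forall t, x <= t <= y -> Rabs (a t) <= v) -> energy y <= energy x.
Proof.
  intros Hxy Hsmall.
  apply (nonincreasing_of_derive_nonpos energy energy_rate x y Hxy).
  intros t Ht; split; [apply is_derive_energy | apply lyapunov_rate_nonpos, Hsmall, Ht].
Qed.

Lemma energy_nonpos_rest t : energy t <= 0 -> r t = 0 /\ s t = 0.
Proof. unfold energy; intros; split; nra. Qed.

Hypothesis Hr_lim : filterlim r (Rbar_locally m_infty) (locally 0).
Hypothesis Hs_lim : filterlim s (Rbar_locally m_infty) (locally 0).

Lemma is_lim_energy : is_lim energy m_infty 0.
Proof.
  pose proof (is_lim_mult r r m_infty 0 0 Hr_lim Hr_lim I) as Hrr.
  pose proof (is_lim_scal_l _ (/ 2) m_infty _ (is_lim_mult s s m_infty 0 0 Hs_lim Hs_lim I)) as Hss.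
  simpl in Hrr, Hss.
  pose proof (is_lim_plus' _ _ m_infty _ _ Hrr Hss) as Hsum.
  replace (0 * 0 + / 2 * (0 * 0)) with 0 in Hsum by ring.
  refine (is_lim_ext _ energy _ _ _ Hsum).
  intros u; unfold energy. field.
Qed.

Hypothesis Ha : forall t, is_derive a t (r t).
Hypothesis Ha_lim : filterlim a (Rbar_locally m_infty) (locally a0).

Lemma rest_left_of_small_amplitude y :
  (forall t, t < y -> Rabs (a t) <= v) ->
  forall t, t < y -> a t = a0 /\ r t = 0 /\ s t = 0.
Proof.
  intros Hsmall.
  assert (Hrest : forall t, t < y -> r t = 0 /\ s t = 0).
  { intros t Ht; apply energy_nonpos_rest.
    apply (le_lim_minf_of_nonincreasing energy 0 t is_lim_energy).
    intros x Hx; apply energy_nonincreasing; [lra|].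
    intros u Hu; apply Hsmall; lra. }
  intros t Ht; split; [| exact (Hrest t Ht)].
  apply (lim_minf_of_const_left a a0 t Ha_lim).
  intros x Hx; symmetry; apply const_of_derive_zero; [lra|].
  intros u Hu; rewrite <- (proj1 (Hrest u ltac:(lra))); apply Ha.
Qed.

Lemma rest_of_small_limit :
  Rabs a0 < v -> forall t, a t = a0 /\ r t = 0 /\ s t = 0.
Proof.
  intros Ha0.
  set (w := (Rabs a0 + v) / 2).
  assert (Hgap : 0 < w - Rabs a0) by (unfold w; lra).
  assert (Hnear : forall u, Rabs (u - a0) < w - Rabs a0 -> Rabs u <= w).
  { intros u Hu; pose proof (Rabs_triang_inv u a0); lra. }
  assert (Hsmall : forall t, Rabs (a t) <= w).
  { apply left_half_line_induction.
    - destruct (proj1 (filterlim_locally a a0) Ha_lim (mkposreal _ Hgap)) as [y Hy].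
      exists y; intros t Ht; apply Hnear, (Hy t Ht).
    - intros m Hm.
      assert (Hrest : forall t, t < m -> a t = a0).
      { intros t Ht; apply (rest_left_of_small_amplitude m); [| exact Ht].
        intros u Hu; specialize (Hm u Hu); unfold w in Hm; lra. }
      destruct (continuous_const_left_extend a a0 m _
                  (ex_derive_continuous a m (ex_intro _ _ (Ha m))) Hrest Hgap)
        as [d [Hd Hext]].
      exists d; split; [exact Hd|].
      intros t Ht; apply Hnear, Hext, Ht. }
  intros t; apply (rest_left_of_small_amplitude (t + 1)); [| lra].
  intros u _; specialize (Hsmall u); unfold w in Hsmall; lra.
Qed.

End Lyapunov.

Theorem lemma2 (v : R) (a r s : R -> R) (a0 : R) :
  0 < v ->
  (forall xi : R, is_derive a xi (r xi)) ->
  (forall xi : R, is_derive r xi (- v * r xi - s xi * a xi / 2 + a xi * Rabs (r xi) / 2)) ->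
  (forall xi : R, is_derive s xi (- v * s xi - r xi * a xi)) ->
  filterlim a (Rbar_locally m_infty) (locally a0) ->
  filterlim r (Rbar_locally m_infty) (locally 0) ->
  filterlim s (Rbar_locally m_infty) (locally 0) ->
  ~ (forall xi : R, a xi = a0 /\ r xi = 0 /\ s xi = 0) ->
  Rabs a0 >= 4 / 5 * v /\
  exists xi0 : R,
    (forall xi : R, xi < xi0 -> 0 < a xi) \/ (forall xi : R, xi < xi0 -> a xi < 0).
Proof.
  intros Hv Ha Hr Hs Ha_lim Hr_lim Hs_lim Hnontrivial.
  assert (Hlarge : v <= Rabs a0).
  { destruct (Rle_or_lt v (Rabs a0)) as [|Hsmall]; [assumption|].
    exfalso; apply Hnontrivial.
    exact (rest_of_small_limit v a0 a r s Hr Hs Hr_lim Hs_lim Ha Ha_lim Hsmall). }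
  split; [lra|].
  apply (lim_minf_sign a a0 Ha_lim).
  intros ->; rewrite Rabs_R0 in Hlarge; lra.
Qed.
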